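(* Let $A \in \mathbb{C}^{n \times n}$, and fix $A^-\in A\{1\}$ and $A^{GD}\in A\{GD\}$. For $X\in\mathbb{C}^{n\times n}$ the following are equivalent: (i) $X = A^{GD}AA^{-}$; (ii) $XA=A^{GD}A$ and $N(X)=N(AA^{-})$; (iii) $XAA^{GD}=A^{GD}AA^{GD}$ and $N(X)=N(AA^{-})$.
   Context: For $A\in\mathbb{C}^{n\times n}$, $ind(A)$ is the smallest nonnegative integer $k$ with $\mathrm{rank}(A^k)=\mathrm{rank}(A^{k+1})$. $A\{1\}$ is the set of matrices $X$ with $AXA=A$. With $k=ind(A)$, $A\{GD\}$ is the set of G-Drazin inverses of $A$: matrices $X$ with $AXA=A$, $XA^{k+1}=A^k$, $A^{k+1}X=A^k$. $N(\cdot)$ denotes null space. The matrix $A^{GD}AA^-$ is called the GD1 inverse of $A$ associated with $A^-$ and $A^{GD}$. *)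

From mathcomp Require Import all_boot all_order all_algebra.
From mathcomp Require Import all_reals.
From mathcomp Require Import complex.
Set Implicit Arguments. Unset Strict Implicit. Unset Printing Implicit Defensive.
Import Order.TTheory GRing.Theory Num.Theory.
Local Open Scope ring_scope.

Definition is_ind {F : fieldType} {n : nat} (A : 'M[F]_n) (k : nat) : Prop :=
  \rank (A ^+ k) = \rank (A ^+ k.+1) /\
  (forall j : nat, (j < k)%N -> \rank (A ^+ j) <> \rank (A ^+ j.+1)).

Definition inner_inv {F : fieldType} {n : nat} (A X : 'M[F]_n) : Prop :=
  A *m X *m A = A.

Definition GD_inv {F : fieldType} {n : nat} (A X : 'M[F]_n) : Prop :=
  forall k, is_ind A k ->
    [/\ A *m X *m A = A, X *m A ^+ k.+1 = A ^+ k & A ^+ k.+1 *m X = A ^+ k].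

Definition nullsp_eq {F : fieldType} {n : nat} (X Y : 'M[F]_n) : Prop :=
  forall v : 'cV[F]_n, X *m v = 0 <-> Y *m v = 0.

From mathcomp Require Import all_boot all_order all_algebra.
From mathcomp Require Import all_reals.
From mathcomp Require Import complex.
From mathcomp Require Import zify.
Set Implicit Arguments. Unset Strict Implicit. Unset Printing Implicit Defensive.
Import GRing.Theory Num.Theory.
Local Open Scope ring_scope.
Local Open Scope complex_scope.

(* The key fact is that N(M) <= N(Y) together with M P = M forces Y P = Y,
   because M (1 - P) = 0.  For (iii) => (i): X A = X (A A^GD A) =
   (A^GD A A^GD) A = A^GD A, and A A^- is idempotent with N(A A^-) <= N(X),
   so X = X A A^- = A^GD A A^-. *)

Section NullSpace.
Variables (R : pzRingType) (m n p : nat).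
Implicit Types (M : 'M[R]_(m, n)) (Y : 'M[R]_(p, n)).

Lemma nullsp_sub_mulmx0 M Y q (B : 'M[R]_(n, q)) :
  (forall v : 'cV_n, M *m v = 0 -> Y *m v = 0) -> M *m B = 0 -> Y *m B = 0.
Proof.
move=> sub_MY MB0; apply/matrixP => i j.
have colM k (C : 'M_(k, n)) : col j (C *m B) = C *m col j B.
  by rewrite !colE mulmxA.
have /sub_MY : M *m col j B = 0 by rewrite -colM MB0 col0.
by move/matrixP/(_ i 0); rewrite -colM !mxE.
Qed.

Lemma nullsp_sub_mulmx_fix M Y (P : 'M[R]_n) :
  (forall v : 'cV_n, M *m v = 0 -> Y *m v = 0) -> M *m P = M -> Y *m P = Y.
Proof.
move=> sub_MY MP; apply/eqP; rewrite -subr_eq0 -{2}[Y]mulmx1 -mulmxBr.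
apply/eqP; apply: nullsp_sub_mulmx0 sub_MY _.
by rewrite mulmxBr mulmx1 MP subrr.
Qed.

End NullSpace.

Lemma nullsp_eq_mull (F : fieldType) n (B C M : 'M[F]_n) :
  C *m B *m M = M -> nullsp_eq (B *m M) M.
Proof.
move=> CBM v; rewrite -mulmxA; split=> [BMv0 | ->]; last by rewrite mulmx0.
by rewrite -CBM -!mulmxA BMv0 mulmx0.
Qed.

Section Index.
Variables (F : fieldType) (n : nat) (A : 'M[F]_n).

Lemma mxrank_exprS_le j : (\rank (A ^+ j.+1) <= \rank (A ^+ j))%N.
Proof. by rewrite exprSr mxrankM_maxl. Qed.

Lemma is_ind_exists : exists k, is_ind A k.
Proof.
have /existsP[j /eqP rank_eq] : [exists j : 'I_n.+1, \rank (A ^+ j) == \rank (A ^+ j.+1)].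
  apply: contraT => /existsPn rank_neq.
  suff rank_bound j : (j <= n.+1)%N -> (\rank (A ^+ j) + j <= n)%N.
    by have := rank_bound _ (leqnn _); lia.
  elim: j => [|j IHj] lt_j; first by rewrite expr0 mxrank1 addn0.
  have := rank_neq (Ordinal lt_j); have := mxrank_exprS_le j.
  by have := IHj (ltnW lt_j); rewrite /=; lia.
have ex_eq : exists j, \rank (A ^+ j) == \rank (A ^+ j.+1) by exists j; apply/eqP.
exists (ex_minn ex_eq); case: ex_minnP => k /eqP rank_k min_k; split=> // i lt_ik.
by move/eqP/min_k; rewrite leqNgt lt_ik.
Qed.

Lemma GD_inv_inner_inv G : GD_inv A G -> inner_inv A G.
Proof. by have [k /[swap] /[apply] -[]] := is_ind_exists. Qed.

End Index.

Theorem theorem2p6 (R : realType) (n : nat) (A Am AGD X : 'M[R[i]]_n) :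
  inner_inv A Am -> GD_inv A AGD ->
  [<-> X = AGD *m A *m Am;
       X *m A = AGD *m A /\ nullsp_eq X (A *m Am);
       X *m A *m AGD = AGD *m A *m AGD /\ nullsp_eq X (A *m Am)].
Proof.
rewrite /inner_inv => AAmA /GD_inv_inner_inv; rewrite /inner_inv => AGDA.
tfae.
- move=> ->; split; first by rewrite -!mulmxA (mulmxA A Am) AAmA.
  by rewrite -mulmxA; apply: (nullsp_eq_mull (C := A)); rewrite !mulmxA AGDA.
- by case=> -> nullX; split.
- case=> XAAGD nullX.
  have XA : X *m A = AGD *m A.
    by rewrite -{1}AGDA !mulmxA XAAGD -(mulmxA AGD) -mulmxA AGDA.
  have X_AAm : X *m (A *m Am) = X.
    by apply: (nullsp_sub_mulmx_fix (fun v => (nullX v).2)); rewrite mulmxA AAmA.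
  by rewrite -X_AAm mulmxA XA.
Qed.
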